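(* (Equivalence of CPL* natural deduction and the focused sequent calculus.) Fix a set $W$ of worlds with a converse well-founded accessibility relation $\prec$. For every (unpolarized) context $\Gamma$, proposition $A$ and world $w$: $\Gamma \vdash_{\mathbf{CPL*}} A[w]$ if and only if the inversion sequent $\Gamma^{\circledcirc}; \cdot \Longrightarrow A^{\ominus}[w]$ is derivable in the focused sequent calculus.
   Context: Fix a set $W$ of worlds and a binary relation $\prec$ on $W$ that is converse well-founded (no infinite chain $w_0\prec w_1\prec\cdots$); $\prec^*$ is its reflexive–transitive closure. Atomic propositions are each designated either positive ($Q^+$) or negative ($Q^-$). Unpolarized propositions: $A,B,C ::= Q \mid \bot \mid A\supset B \mid \Diamond A \mid \Box A$; an unpolarized context $\Gamma$ is a finite collection of judgments $A[w]$. Natural deduction $\Gamma \vdash_{\mathbf{CPL*}} A[w]$, defined one world at a time (provability at $w$ after provability at all worlds reachable from $w$ by one or more $\prec$-steps) as the least relation closed under: (hyp) $\Gamma, A[w]\vdash A[w]$; ($\bot E$) $w'\prec^* w$ and $\Gamma\vdash\bot[w]$ imply $\Gamma\vdash C[w']$; ($\supset I$) $\Gamma,A[w]\vdash B[w]$ implies $\Gamma\vdash A\supset B[w]$; ($\supset E$) $\Gamma\vdash A\supset B[w]$ and $\Gamma\vdash A[w]$ imply $\Gamma\vdash B[w]$; ($\Diamond I$) $w\prec w'$ and $\Gamma\vdash A[w']$ imply $\Gamma\vdash\Diamond A[w]$; ($\Box I$) if $\Gamma\vdash A[w']$ for all $w'$ with $w\prec w'$ then $\Gamma\vdash\Box A[w]$;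 ($\Diamond E$) if $w''\prec^* w$, $\Gamma\vdash\Diamond A[w]$, and for all $w'$ with $w\prec w'$, $\Gamma\vdash A[w']$ implies $\Gamma\vdash C[w'']$, then $\Gamma\vdash C[w'']$; ($\Box E$) if $w''\prec^* w$, $\Gamma\vdash\Box A[w]$, and ($\Gamma\vdash A[w']$ for all $w'$ with $w\prec w'$) implies $\Gamma\vdash C[w'']$, then $\Gamma\vdash C[w'']$. Polarized propositions: $A^+ ::= Q^+ \mid {\downarrow}A^- \mid \bot \mid \Diamond A^+ \mid \Box A^+$ and $A^- ::= Q^- \mid {\uparrow}A^+ \mid A^+ \supset B^-$. $Q^+$ and ${\downarrow}A^-$ are $\mathit{stable}^+$; $Q^-$ and ${\uparrow}A^+$ are $\mathit{stable}^-$. In the focused calculus, $\Gamma$ is a finite collection of judgments $A^+[w]$ and the inversion context $\Omega$ is either empty ($\cdot$) or a single $A^+[w]$. There are three mutually defined judgments — right focus $\Gamma \vdash [A^+[w]]$, inversion $\Gamma;\Omega \Longrightarrow C^-[w]$, and left focus $\Gamma;[A^-[w']] \Longrightarrow C^-[w]$ — defined one world at a time (well-founded by converse well-foundedness), as the least relations closed under: Right focus: ($QR^+$) $\Gamma, Q^+[w] \vdash [Q^+[w]]$; (${\downarrow}R$) $\Gamma;\cdot\Longrightarrow A^-[w]$ implies $\Gamma\vdash[{\downarrow}A^-[w]]$; ($\Diamond R$) $w\prec w'$ and $\Gamma;\cdot\Longrightarrow {\uparrow}A^+[w']$ imply $\Gamma\vdash[\Diamond A^+[w]]$; ($\Box R$)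 if $\Gamma;\cdot\Longrightarrow{\uparrow}A^+[w']$ for all $w'$ with $w\prec w'$, then $\Gamma\vdash[\Box A^+[w]]$. Inversion: ($\supset R$) $\Gamma;A^+[w]\Longrightarrow B^-[w]$ implies $\Gamma;\cdot\Longrightarrow A^+\supset B^-[w]$; ($L$) if $A^+$ is $\mathit{stable}^+$ and $\Gamma, A^+[w'];\cdot\Longrightarrow C^-[w]$, then $\Gamma; A^+[w']\Longrightarrow C^-[w]$; (${\downarrow}L$) if $C^-$ is $\mathit{stable}^-$, $w\prec^* w'$, and $\Gamma,{\downarrow}A^-[w'];[A^-[w']]\Longrightarrow C^-[w]$, then $\Gamma,{\downarrow}A^-[w'];\cdot\Longrightarrow C^-[w]$; ($\bot L$) $\Gamma;\bot[w']\Longrightarrow C^-[w]$; ($\Diamond L$) if for all $w$ with $w'\prec w$, $\Gamma;\cdot\Longrightarrow{\uparrow}A^+[w]$ implies $\Gamma;\cdot\Longrightarrow C^-[w'']$, then $\Gamma;\Diamond A^+[w']\Longrightarrow C^-[w'']$; ($\Box L$) if ($\Gamma;\cdot\Longrightarrow{\uparrow}A^+[w]$ for all $w$ with $w'\prec w$) implies $\Gamma;\cdot\Longrightarrow C^-[w'']$, then $\Gamma;\Box A^+[w']\Longrightarrow C^-[w'']$; (${\uparrow}R$) $\Gamma\vdash[A^+[w]]$ implies $\Gamma;\cdot\Longrightarrow{\uparrow}A^+[w]$. Left focus: ($QL^-$) $\Gamma;[Q^-[w]]\Longrightarrow Q^-[w]$; (${\uparrow}L$) $\Gamma;A^+[w']\Longrightarrow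 C^-[w]$ implies $\Gamma;[{\uparrow}A^+[w']]\Longrightarrow C^-[w]$; ($\supset L$) $\Gamma\vdash[A^+[w']]$ and $\Gamma;[B^-[w']]\Longrightarrow C^-[w]$ imply $\Gamma;[A^+\supset B^-[w']]\Longrightarrow C^-[w]$. Polarization: $(Q^+)^\oplus=Q^+$, $(\bot)^\oplus=\bot$, $(\Diamond A)^\oplus=\Diamond A^\oplus$, $(\Box A)^\oplus=\Box A^\oplus$, $(Q^-)^\oplus={\downarrow}Q^-$, $(A\supset B)^\oplus={\downarrow}(A^\oplus\supset B^\ominus)$; $(Q^+)^\ominus={\uparrow}Q^+$, $(\bot)^\ominus={\uparrow}\bot$, $(\Diamond A)^\ominus={\uparrow}(\Diamond A^\oplus)$, $(\Box A)^\ominus={\uparrow}(\Box A^\oplus)$, $(Q^-)^\ominus=Q^-$, $(A\supset B)^\ominus=A^\oplus\supset B^\ominus$. Contexts: $(\cdot)^\circledcirc=\cdot$, $(\Gamma,Q^+[w])^\circledcirc=\Gamma^\circledcirc,Q^+[w]$, $(\Gamma,\bot[w])^\circledcirc=\Gamma^\circledcirc,{\downarrow}{\uparrow}\bot[w]$, $(\Gamma,\Diamond A[w])^\circledcirc=\Gamma^\circledcirc,{\downarrow}{\uparrow}(\Diamond A^\oplus)[w]$, $(\Gamma,\Box A[w])^\circledcirc=\Gamma^\circledcirc,{\downarrow}{\uparrow}(\Box A^\oplus)[w]$, $(\Gamma,Q^-[w])^\circledcirc=\Gamma^\circledcirc,{\downarrow}Q^-[w]$, $(\Gamma,A\supset B[w])^\circledcirc=\Gamma^\circledcirc,{\downarrow}(A^\oplus\supset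 B^\ominus)[w]$. *)

(* CPL* natural deduction and its focused sequent calculus,
   both defined "one world at a time" by well-founded recursion on worlds
   (strictly later worlds are smaller), each level being an inductive
   (least) relation whose premises at strictly later worlds are read from
   the already-defined levels (the oracle O). *)
From Stdlib Require Import List Relations Wellfounded.
Import ListNotations.

Inductive uprop : Type :=
| UPosAt : nat -> uprop
| UNegAt : nat -> uprop
| UBot : uprop
| UImp : uprop -> uprop -> uprop
| UDia : uprop -> uprop
| UBox : uprop -> uprop.

Inductive pos : Type :=
| PAtom : nat -> pos
| Down : neg -> pos
| PBot : pos
| PDia : pos -> pos
| PBox : pos -> pos
with neg : Type :=
| NAtom : nat -> neg
| Up : pos -> neg
| Imp : pos -> neg -> neg.

Definition stable_pos (A : pos) : Prop :=
  match A with PAtom _ | Down _ => True | _ => False end.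
Definition stable_neg (C : neg) : Prop :=
  match C with NAtom _ | Up _ => True | _ => False end.

Fixpoint oplus (A : uprop) : pos :=
  match A with
  | UPosAt q => PAtom q
  | UBot => PBot
  | UDia B => PDia (oplus B)
  | UBox B => PBox (oplus B)
  | UNegAt q => Down (NAtom q)
  | UImp B C => Down (Imp (oplus B) (ominus C))
  end
with ominus (A : uprop) : neg :=
  match A with
  | UPosAt q => Up (PAtom q)
  | UBot => Up PBot
  | UDia B => Up (PDia (oplus B))
  | UBox B => Up (PBox (oplus B))
  | UNegAt q => NAtom q
  | UImp B C => Imp (oplus B) (ominus C)
  end.

Definition ctx_hyp (A : uprop) : pos :=
  match A with
  | UPosAt q => PAtom q
  | UBot => Down (Up PBot)
  | UDia B => Down (Up (PDia (oplus B)))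
  | UBox B => Down (Up (PBox (oplus B)))
  | UNegAt q => Down (NAtom q)
  | UImp B C => Down (Imp (oplus B) (ominus C))
  end.

Definition ctx_pol {W : Type} (G : list (uprop * W)) : list (pos * W) :=
  map (fun p => (ctx_hyp (fst p), snd p)) G.

Section Levels.
Variable W : Type.
Variable prec : W -> W -> Prop.

Definition uctx := list (uprop * W).
Definition pctx := list (pos * W).

(* O u G A : the (already defined) judgment G |- A[u] at a strictly later u *)
Inductive ND_at (O : W -> uctx -> uprop -> Prop) (v : W) : uctx -> uprop -> Prop :=
| nd_hyp : forall G A, In (A, v) G -> ND_at O v G A
| nd_botE_same : forall G C, ND_at O v G UBot -> ND_at O v G C
| nd_botE_later : forall G C w, clos_trans W prec v w -> O w G UBot -> ND_at O v G C
| nd_impI : forall G A B, ND_at O v ((A, v) :: G) B -> ND_at O v G (UImp A B)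
| nd_impE : forall G A B, ND_at O v G (UImp A B) -> ND_at O v G A -> ND_at O v G B
| nd_diaI : forall G A w', prec v w' -> O w' G A -> ND_at O v G (UDia A)
| nd_boxI : forall G A, (forall w', prec v w' -> O w' G A) -> ND_at O v G (UBox A)
| nd_diaE_same : forall G A C,
    ND_at O v G (UDia A) ->
    (forall w', prec v w' -> O w' G A -> ND_at O v G C) -> ND_at O v G C
| nd_diaE_later : forall G A C w, clos_trans W prec v w ->
    O w G (UDia A) ->
    (forall w', prec w w' -> O w' G A -> ND_at O v G C) -> ND_at O v G C
| nd_boxE_same : forall G A C,
    ND_at O v G (UBox A) ->
    ((forall w', prec v w' -> O w' G A) -> ND_at O v G C) -> ND_at O v G C
| nd_boxE_later : forall G A C w, clos_trans W prec v w ->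
    O w G (UBox A) ->
    ((forall w', prec w w' -> O w' G A) -> ND_at O v G C) -> ND_at O v G C.

Inductive fjudg : Type :=
| JRF : pctx -> pos -> fjudg                          (* G |- [A[v]] *)
| JInv : pctx -> option (pos * W) -> neg -> fjudg     (* G; Omega ==> C[v] *)
| JLF : pctx -> neg -> W -> neg -> fjudg.             (* G; [A[w']] ==> C[v] *)

Inductive Foc_at (O : W -> fjudg -> Prop) (v : W) : fjudg -> Prop :=
| f_QR : forall G q, In (PAtom q, v) G -> Foc_at O v (JRF G (PAtom q))
| f_DownR : forall G A, Foc_at O v (JInv G None A) -> Foc_at O v (JRF G (Down A))
| f_DiaR : forall G A w', prec v w' -> O w' (JInv G None (Up A)) ->
    Foc_at O v (JRF G (PDia A))
| f_BoxR : forall G A, (forall w', prec v w' -> O w' (JInv G None (Up A))) ->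
    Foc_at O v (JRF G (PBox A))
| f_ImpR : forall G A B, Foc_at O v (JInv G (Some (A, v)) B) ->
    Foc_at O v (JInv G None (Imp A B))
| f_L : forall G A w' C, stable_pos A -> Foc_at O v (JInv ((A, w') :: G) None C) ->
    Foc_at O v (JInv G (Some (A, w')) C)
| f_DownL : forall G A w' C, In (Down A, w') G -> stable_neg C ->
    clos_refl_trans W prec v w' -> Foc_at O v (JLF G A w' C) ->
    Foc_at O v (JInv G None C)
| f_BotL : forall G w' C, Foc_at O v (JInv G (Some (PBot, w')) C)
| f_DiaL : forall G A w' C, clos_refl_trans W prec v w' ->
    (forall w, prec w' w -> O w (JInv G None (Up A)) -> Foc_at O v (JInv G None C)) ->
    Foc_at O v (JInv G (Some (PDia A, w')) C)
| f_BoxL : forall G A w' C, clos_refl_trans W prec v w' ->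
    ((forall w, prec w' w -> O w (JInv G None (Up A))) -> Foc_at O v (JInv G None C)) ->
    Foc_at O v (JInv G (Some (PBox A, w')) C)
| f_UpR : forall G A, Foc_at O v (JRF G A) -> Foc_at O v (JInv G None (Up A))
| f_QL : forall G q, Foc_at O v (JLF G (NAtom q) v (NAtom q))
| f_UpL : forall G A w' C, Foc_at O v (JInv G (Some (A, w')) C) ->
    Foc_at O v (JLF G (Up A) w' C)
| f_ImpL_same : forall G A B C, Foc_at O v (JRF G A) -> Foc_at O v (JLF G B v C) ->
    Foc_at O v (JLF G (Imp A B) v C)
| f_ImpL_later : forall G A B w' C, clos_trans W prec v w' -> O w' (JRF G A) ->
    Foc_at O v (JLF G B w' C) -> Foc_at O v (JLF G (Imp A B) w' C).

(* "u is strictly later than v" as a well-founded order *)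
Definition later (u v : W) : Prop := clos_trans W (fun x y => prec y x) u v.

Definition later_wf (wf : well_founded (fun x y => prec y x)) : well_founded later :=
  wf_clos_trans W (fun x y => prec y x) wf.

Definition ND (wf : well_founded (fun x y => prec y x)) : W -> uctx -> uprop -> Prop :=
  Fix (later_wf wf) (fun _ => uctx -> uprop -> Prop)
    (fun v rec => ND_at (fun u G A => exists h : later u v, rec u h G A) v).

Definition Foc (wf : well_founded (fun x y => prec y x)) : W -> fjudg -> Prop :=
  Fix (later_wf wf) (fun _ => fjudg -> Prop)
    (fun v rec => Foc_at (fun u j => exists h : later u v, rec u h j) v).

Definition nd_derivable (wf : well_founded (fun x y => prec y x))
  (G : uctx) (A : uprop) (w : W) : Prop := ND wf w G A.

Definition inv_derivable (wf : well_founded (fun x y => prec y x))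
  (G : pctx) (Om : option (pos * W)) (C : neg) (w : W) : Prop :=
  Foc wf w (JInv G Om C).

End Levels.

(* Both directions are proved together, one world at a time, assuming both at all strictly
   later worlds.

   Soundness: a focused derivation at [v] is read back as a natural deduction proof by
   induction on the derivation. A formula under left inversion or left focus at [w] is
   accounted for by a natural deduction proof of it at [w]; when it finally enters the
   context, that proof is cut in.

   Completeness is by normalization by evaluation. Propositions are interpreted over contexts
   ordered by extension with hypotheses at [v]: negative ones by inversion sequents, positive
   ones through a continuation monad observed by inversion sequents with stable succedents.
   Reflection and reification connect this model with the focused calculus, and every natural
   deduction proof at [v] is evaluated in it. A diamond or box proved at a strictly later world
   [w] with no successor supplying what its elimination needs makes [w] inconsistent (the one
   classical step), and a focused derivation of [↑⊥] at [w] yields any stable conclusion at [v]. *)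

From Pilot Require Import Defs.
From Stdlib Require Import List Relations Wellfounded Classical FunctionalExtensionality.

Section CPL.
Variable W : Type.
Variable prec : W -> W -> Prop.
Variable wf : well_founded (fun x y => prec y x).

Local Notation later := (later W prec).
Local Notation reach := (clos_refl_trans W prec).
Local Notation ND := (ND W prec wf).
Local Notation Foc := (Foc W prec wf).
Local Notation JRF := (JRF W).
Local Notation JInv := (JInv W).
Local Notation JLF := (JLF W).

Lemma later_iff u v : later u v <-> clos_trans W prec v u.
Proof. symmetry; apply clos_trans_transp_permute. Qed.

Lemma later_irrefl v : ~ later v v.
Proof.
  induction (later_wf W prec wf v) as [x _ IH].
  intro H; exact (IH x H H).
Qed.

Lemma later_trans u v w : later u v -> later v w -> later u w.
Proof. apply t_trans. Qed.

Lemma later_of_prec v w : prec v w -> later w v.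
Proof. intro H; apply t_step; exact H. Qed.

Lemma reach_of_later v w : later w v -> reach v w.
Proof. intro H; apply clos_t_clos_rt, later_iff, H. Qed.

Lemma reach_cases v w : reach v w -> v = w \/ later w v.
Proof.
  intro H; apply clos_rt_rt1n in H.
  induction H as [|v x w Hvx _ [E | L]]; [now left | right ..].
  - subst; now apply later_of_prec.
  - eapply later_trans; [exact L | now apply later_of_prec].
Qed.

Lemma reach_later_trans v w x : reach v w -> later x w -> later x v.
Proof.
  intros R L; destruct (reach_cases _ _ R) as [-> | L']; [exact L | eapply later_trans; eauto].
Qed.

Lemma later_reach_trans u w x : later w u -> reach w x -> later x u.
Proof.
  intros L R; destruct (reach_cases _ _ R) as [<- | L']; [exact L | eapply later_trans; eauto].
Qed.

Lemma reach_later_absurd u w : reach u w -> ~ later u w.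
Proof. intros R L; apply (later_irrefl w); eapply later_reach_trans; eauto. Qed.

Definition ND_later (v u : W) (G : uctx W) (A : uprop) : Prop :=
  exists _ : later u v, ND u G A.

Definition Foc_later (v u : W) (j : fjudg W) : Prop :=
  exists _ : later u v, Foc u j.

Lemma ND_laterP v u G A : ND_later v u G A <-> later u v /\ ND u G A.
Proof. split; intros [L D]; [split | exists L]; assumption. Qed.

Lemma Foc_laterP v u j : Foc_later v u j <-> later u v /\ Foc u j.
Proof. split; intros [L D]; [split | exists L]; assumption. Qed.

Lemma Fix_later_eq (P : W -> Type) (F : forall v, (forall u, later u v -> P u) -> P v) v :
  Fix (later_wf W prec wf) P F v = F v (fun u _ => Fix (later_wf W prec wf) P F u).
Proof.
  apply Fix_eq; intros x f g Hfg.
  replace g with f; [reflexivity |].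
  apply functional_extensionality_dep; intro y.
  apply functional_extensionality_dep; intro p; apply Hfg.
Qed.

Lemma ND_unfold v G A : ND v G A <-> ND_at W prec (ND_later v) v G A.
Proof. unfold Defs.ND; now rewrite Fix_later_eq. Qed.

Lemma Foc_unfold v j : Foc v j <-> Foc_at W prec (Foc_later v) v j.
Proof. unfold Defs.Foc; now rewrite Fix_later_eq. Qed.

Lemma ND_hyp v G A : In (A, v) G -> ND v G A.
Proof. intro I; apply ND_unfold, nd_hyp, I. Qed.

Lemma ND_impI v G A B : ND v ((A, v) :: G) B -> ND v G (UImp A B).
Proof. rewrite !ND_unfold; apply nd_impI. Qed.

Lemma ND_impE v G A B : ND v G (UImp A B) -> ND v G A -> ND v G B.
Proof. rewrite !ND_unfold; apply nd_impE. Qed.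

Lemma ND_diaI v w G A : prec v w -> ND w G A -> ND v G (UDia A).
Proof.
  intros p D; apply ND_unfold; apply nd_diaI with (w' := w); [exact p |].
  apply ND_laterP; split; [apply later_of_prec, p | exact D].
Qed.

Lemma ND_boxI v G A : (forall w, prec v w -> ND w G A) -> ND v G (UBox A).
Proof.
  intro D; apply ND_unfold, nd_boxI; intros w p.
  apply ND_laterP; split; [apply later_of_prec, p | apply D, p].
Qed.

Lemma ND_botE v w G C : reach v w -> ND w G UBot -> ND v G C.
Proof.
  intros R D; apply ND_unfold; destruct (reach_cases _ _ R) as [<- | L].
  - apply nd_botE_same, ND_unfold, D.
  - apply nd_botE_later with (w := w); [apply later_iff, L | apply ND_laterP; auto].
Qed.

Lemma ND_diaE v w G A C : reach v w -> ND w G (UDia A) ->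
  (forall w', prec w w' -> ND w' G A -> ND v G C) -> ND v G C.
Proof.
  intros R D K; apply ND_unfold; destruct (reach_cases _ _ R) as [<- | L].
  - apply nd_diaE_same with (A := A); [apply ND_unfold, D |].
    intros w' p [_ D']; apply ND_unfold, (K w' p D').
  - apply nd_diaE_later with (A := A) (w := w); [apply later_iff, L | apply ND_laterP; auto |].
    intros w' p [_ D']; apply ND_unfold, (K w' p D').
Qed.

Lemma ND_boxE v w G A C : reach v w -> ND w G (UBox A) ->
  ((forall w', prec w w' -> ND w' G A) -> ND v G C) -> ND v G C.
Proof.
  intros R D K; apply ND_unfold.
  assert (K' : (forall w', prec w w' -> ND_later v w' G A) -> ND_at W prec (ND_later v) v G C).
  { intro Hall; apply ND_unfold, K; intros w' p; now destruct (Hall w' p). }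
  destruct (reach_cases _ _ R) as [<- | L].
  - apply nd_boxE_same with (A := A); [apply ND_unfold, D | exact K'].
  - apply nd_boxE_later with (A := A) (w := w);
      [apply later_iff, L | apply ND_laterP; auto | exact K'].
Qed.

Lemma ND_dia_inv w G A : ND w G (UDia A) ->
  (exists w', prec w w' /\ ND w' G A) \/ ND w G UBot.
Proof.
  intro D; destruct (classic (exists w', prec w w' /\ ND w' G A)) as [Ex | NEx]; [now left | right].
  apply (ND_diaE _ _ _ _ _ (rt_refl _ _ w) D).
  intros w' p D'; exfalso; apply NEx; eauto.
Qed.

Lemma ND_box_inv w G A : ND w G (UBox A) ->
  (forall w', prec w w' -> ND w' G A) \/ ND w G UBot.
Proof.
  intro D; destruct (classic (forall w', prec w w' -> ND w' G A)) as [All | NAll];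
    [now left | right].
  apply (ND_boxE _ _ _ _ _ (rt_refl _ _ w) D); tauto.
Qed.

Lemma Foc_QR v G q : In (PAtom q, v) G -> Foc v (JRF G (PAtom q)).
Proof. intro I; apply Foc_unfold, f_QR, I. Qed.

Lemma Foc_DownR v G A : Foc v (JInv G None A) -> Foc v (JRF G (Down A)).
Proof. rewrite !Foc_unfold; apply f_DownR. Qed.

Lemma Foc_DiaR v w G A : prec v w -> Foc w (JInv G None (Up A)) -> Foc v (JRF G (PDia A)).
Proof.
  intros p F; apply Foc_unfold, f_DiaR with (w' := w); [exact p |].
  apply Foc_laterP; split; [apply later_of_prec, p | exact F].
Qed.

Lemma Foc_BoxR v G A : (forall w, prec v w -> Foc w (JInv G None (Up A))) ->
  Foc v (JRF G (PBox A)).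
Proof.
  intro F; apply Foc_unfold, f_BoxR; intros w p.
  apply Foc_laterP; split; [apply later_of_prec, p | apply F, p].
Qed.

Lemma Foc_ImpR v G A B : Foc v (JInv G (Some (A, v)) B) -> Foc v (JInv G None (Imp A B)).
Proof. rewrite !Foc_unfold; apply f_ImpR. Qed.

Lemma Foc_L v G A w C : stable_pos A ->
  Foc v (JInv ((A, w) :: G) None C) -> Foc v (JInv G (Some (A, w)) C).
Proof. rewrite !Foc_unfold; apply f_L. Qed.

Lemma Foc_DownL v G A w C : In (Down A, w) G -> stable_neg C -> reach v w ->
  Foc v (JLF G A w C) -> Foc v (JInv G None C).
Proof. rewrite !Foc_unfold; apply f_DownL. Qed.

Lemma Foc_BotL v G w C : Foc v (JInv G (Some (PBot, w)) C).
Proof. apply Foc_unfold, f_BotL. Qed.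

Lemma Foc_DiaL v G A w C : reach v w ->
  (forall x, prec w x -> Foc x (JInv G None (Up A)) -> Foc v (JInv G None C)) ->
  Foc v (JInv G (Some (PDia A, w)) C).
Proof.
  intros R K; apply Foc_unfold, f_DiaL; [exact R |].
  intros x p [_ F]; apply Foc_unfold, (K x p F).
Qed.

Lemma Foc_BoxL v G A w C : reach v w ->
  ((forall x, prec w x -> Foc x (JInv G None (Up A))) -> Foc v (JInv G None C)) ->
  Foc v (JInv G (Some (PBox A, w)) C).
Proof.
  intros R K; apply Foc_unfold, f_BoxL; [exact R |].
  intro Hall; apply Foc_unfold, K; intros x p; now destruct (Hall x p).
Qed.

Lemma Foc_UpR v G A : Foc v (JRF G A) -> Foc v (JInv G None (Up A)).
Proof. rewrite !Foc_unfold; apply f_UpR. Qed.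

Lemma Foc_QL v G q : Foc v (JLF G (NAtom q) v (NAtom q)).
Proof. apply Foc_unfold, f_QL. Qed.

Lemma Foc_UpL v G A w C : Foc v (JInv G (Some (A, w)) C) -> Foc v (JLF G (Up A) w C).
Proof. rewrite !Foc_unfold; apply f_UpL. Qed.

Lemma Foc_ImpL v G A B w C : reach v w -> Foc w (JRF G A) ->
  Foc v (JLF G B w C) -> Foc v (JLF G (Imp A B) w C).
Proof.
  intros R FA FB; apply Foc_unfold; destruct (reach_cases _ _ R) as [<- | L].
  - apply f_ImpL_same; apply Foc_unfold; assumption.
  - apply f_ImpL_later; [apply later_iff, L | apply Foc_laterP; auto | apply Foc_unfold, FB].
Qed.

Definition seen_from {T : Type} (u : W) (P Q : T -> W -> Prop) : Prop :=
  (forall X x, reach u x -> P X x) /\ (forall X x, later x u -> Q X x).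

Lemma seen_from_later {T : Type} u w (P Q : T -> W -> Prop) :
  seen_from u P Q -> later w u -> seen_from w P Q /\ seen_from w Q P.
Proof.
  intros [HP HQ] L; split; split; intros X x H.
  - apply HP, reach_of_later; eapply later_reach_trans; eauto.
  - apply HQ; eapply later_trans; eauto.
  - apply HQ; eapply later_reach_trans; eauto.
  - apply HP, reach_of_later; eapply later_trans; eauto.
Qed.

Definition ctx_le {T : Type} (u : W) (G1 G2 : list (T * W)) : Prop :=
  seen_from u (fun X x => In (X, x) G1 -> In (X, x) G2) (fun X x => In (X, x) G2 -> In (X, x) G1).

Lemma ctx_le_later {T : Type} u w (G1 G2 : list (T * W)) :
  ctx_le u G1 G2 -> later w u -> ctx_le w G1 G2 /\ ctx_le w G2 G1.
Proof. apply seen_from_later. Qed.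

Lemma ctx_le_cons {T : Type} u (G1 G2 : list (T * W)) a :
  ctx_le u G1 G2 -> ctx_le u (a :: G1) (a :: G2).
Proof. intros [S12 S21]; split; intros X x H [E | I]; solve [now left | right; auto]. Qed.

Definition judg_ctx (j : fjudg W) : pctx W :=
  match j with Defs.JRF _ G _ | Defs.JInv _ G _ _ | Defs.JLF _ G _ _ _ => G end.

Definition judg_with_ctx (j : fjudg W) (G : pctx W) : fjudg W :=
  match j with
  | Defs.JRF _ _ A => JRF G A
  | Defs.JInv _ _ Om C => JInv G Om C
  | Defs.JLF _ _ A w C => JLF G A w C
  end.

Lemma Foc_weaken u j G2 : ctx_le u (judg_ctx j) G2 -> Foc u j -> Foc u (judg_with_ctx j G2).
Proof.
  revert j G2; induction u as [v IHv] using (well_founded_induction (later_wf W prec wf)).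
  assert (fwd : forall w G1 G2 j, ctx_le v G1 G2 ->
                Foc_later v w (judg_with_ctx j G1) -> Foc w (judg_with_ctx j G2)).
  { intros w G1 G2 j S [L F]; destruct j; refine (IHv w L _ G2 _ F).
    all: exact (proj1 (ctx_le_later _ _ _ _ S L)). }
  assert (bwd : forall w G1 G2 j, later w v -> ctx_le v G1 G2 ->
                Foc w (judg_with_ctx j G2) -> Foc_later v w (judg_with_ctx j G1)).
  { intros w G1 G2 j L S F; exists L; destruct j; refine (IHv w L _ G1 _ F).
    all: exact (proj2 (ctx_le_later _ _ _ _ S L)). }
  intros j G2 S F; rewrite Foc_unfold in F; revert G2 S.
  induction F as [G q Hin | G A F IHF | G A w' p F | G A F | G A B F IHF | G A w' C s F IHF
                 | G A w' C Hin s R F IHF | G w' C | G A w' C R K IHK | G A w' C R K IHK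
                 | G A F IHF | G q | G A w' C F IHF | G A B C F1 IHF1 F2 IHF2
                 | G A B w' C Hw F1 F2 IHF2]; intros G2 S; simpl in S.
  - apply Foc_QR, (proj1 S); [apply rt_refl | exact Hin].
  - apply Foc_DownR, (IHF G2 S).
  - apply Foc_DiaR with w'; [exact p | exact (fwd _ _ _ (JInv G None (Up A)) S F)].
  - apply Foc_BoxR; intros x p; exact (fwd _ _ _ (JInv G None (Up A)) S (F x p)).
  - apply Foc_ImpR, (IHF G2 S).
  - apply Foc_L; [exact s | exact (IHF _ (ctx_le_cons _ _ _ _ S))].
  - apply Foc_DownL with A w'; [exact (proj1 S _ _ R Hin) | exact s | exact R | exact (IHF G2 S)].
  - apply Foc_BotL.
  - apply Foc_DiaL; [exact R |]; intros x p Fx; apply (IHK x p); [| exact S].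
    exact (bwd _ _ _ (JInv G None (Up A)) (reach_later_trans _ _ _ R (later_of_prec _ _ p)) S Fx).
  - apply Foc_BoxL; [exact R |]; intro Fall; apply IHK; [intros x p | exact S].
    refine (bwd _ _ _ (JInv G None (Up A)) _ S (Fall x p)).
    exact (reach_later_trans _ _ _ R (later_of_prec _ _ p)).
  - apply Foc_UpR, (IHF G2 S).
  - apply Foc_QL.
  - apply Foc_UpL, (IHF G2 S).
  - apply Foc_ImpL; [apply rt_refl | exact (IHF1 G2 S) | exact (IHF2 G2 S)].
  - apply Foc_ImpL; [apply clos_t_clos_rt, Hw | | exact (IHF2 G2 S)].
    exact (fwd _ _ _ (JRF G A) S F1).
Qed.

Section Transport.

Variable R : W -> uctx W -> uctx W -> Prop.
Hypothesis R_hyp : forall v G1 G2 A, R v G1 G2 -> In (A, v) G1 -> ND v G2 A.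
Hypothesis R_cons : forall v G1 G2 A, R v G1 G2 -> R v ((A, v) :: G1) ((A, v) :: G2).
Hypothesis R_later : forall v w G1 G2, R v G1 G2 -> later w v -> R w G1 G2 /\ R w G2 G1.

Lemma ND_transport v G1 G2 A : R v G1 G2 -> ND v G1 A -> ND v G2 A.
Proof.
  revert G1 G2 A; induction v as [v IHv] using (well_founded_induction (later_wf W prec wf)).
  intros G1 G2 A S D; rewrite ND_unfold in D; revert G2 S.
  assert (fwd : forall w G1 G2 B, ND_later v w G1 B -> R v G1 G2 -> ND w G2 B).
  { intros w G1' G2' B [L F] S; exact (IHv w L _ _ _ (proj1 (R_later _ _ _ _ S L)) F). }
  assert (bwd : forall w G1 G2 B, later w v -> R v G1 G2 -> ND w G2 B -> ND_later v w G1 B).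
  { intros w G1' G2' B L S F; exists L; exact (IHv w L _ _ _ (proj2 (R_later _ _ _ _ S L)) F). }
  induction D as [G B I | G C D IHD | G C w Hw Dw | G B C D IHD | G B C D1 IHD1 D2 IHD2
                 | G B w p Dw | G B Dw | G B C D IHD K IHK | G B C w Hw Dw K IHK
                 | G B C D IHD K IHK | G B C w Hw Dw K IHK]; intros G2 S.
  - exact (R_hyp _ _ _ _ S I).
  - apply ND_botE with v; [apply rt_refl | exact (IHD G2 S)].
  - apply ND_botE with w; [apply clos_t_clos_rt, Hw | exact (fwd _ _ _ _ Dw S)].
  - apply ND_impI, IHD, R_cons, S.
  - apply ND_impE with B; [exact (IHD1 G2 S) | exact (IHD2 G2 S)].
  - apply ND_diaI with w; [exact p | exact (fwd _ _ _ _ Dw S)].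
  - apply ND_boxI; intros w p; exact (fwd _ _ _ _ (Dw w p) S).
  - apply ND_diaE with v B; [apply rt_refl | exact (IHD G2 S) |].
    intros w p Dw; apply (IHK w p); [| exact S].
    exact (bwd _ _ _ _ (later_of_prec _ _ p) S Dw).
  - apply ND_diaE with w B; [apply clos_t_clos_rt, Hw | exact (fwd _ _ _ _ Dw S) |].
    intros w' p Dw'; apply (IHK w' p); [| exact S].
    refine (bwd _ _ _ _ _ S Dw').
    eapply later_trans; [apply later_of_prec, p | apply later_iff, Hw].
  - apply ND_boxE with v B; [apply rt_refl | exact (IHD G2 S) |].
    intro Hall; apply IHK; [intros w p | exact S].
    exact (bwd _ _ _ _ (later_of_prec _ _ p) S (Hall w p)).
  - apply ND_boxE with w B; [apply clos_t_clos_rt, Hw | exact (fwd _ _ _ _ Dw S) |].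
    intro Hall; apply IHK; [intros w' p | exact S].
    refine (bwd _ _ _ _ _ S (Hall w' p)).
    eapply later_trans; [apply later_of_prec, p | apply later_iff, Hw].
Qed.

End Transport.

Lemma ND_weaken u G1 G2 A : ctx_le u G1 G2 -> ND u G1 A -> ND u G2 A.
Proof.
  apply (ND_transport (fun u G1 G2 => ctx_le u G1 G2)).
  - intros v G1' G2' B S I; apply ND_hyp, (proj1 S), I; apply rt_refl.
  - intros; apply ctx_le_cons; assumption.
  - intros v w G1' G2' S L; exact (ctx_le_later _ _ _ _ S L).
Qed.

Lemma ND_weaken_cons u x G A B : reach u x -> ND x G B -> ND x ((A, u) :: G) B.
Proof.
  intros R D; apply ND_weaken with G; [| exact D].
  split; intros X y H I; [now right |].
  destruct I as [E | I]; [injection E as <- <- | exact I].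
  exfalso; eapply reach_later_absurd; eauto.
Qed.

Definition ctx_derives (u : W) (G1 G2 : uctx W) : Prop :=
  seen_from u (fun X x => In (X, x) G1 -> ND x G2 X) (fun X x => In (X, x) G2 -> ND x G1 X).

Lemma ctx_derives_later u w G1 G2 :
  ctx_derives u G1 G2 -> later w u -> ctx_derives w G1 G2 /\ ctx_derives w G2 G1.
Proof. apply seen_from_later. Qed.

Lemma ctx_derives_cons u G1 G2 A :
  ctx_derives u G1 G2 -> ctx_derives u ((A, u) :: G1) ((A, u) :: G2).
Proof.
  intros [S12 S21]; split; intros X x H [E | I].
  - injection E as <- <-; apply ND_hyp; now left.
  - apply ND_weaken_cons, S12; assumption.
  - injection E as <- <-; exfalso; exact (later_irrefl _ H).
  - apply ND_weaken_cons, S21; [apply reach_of_later | ..]; assumption.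
Qed.

Lemma ND_cut u w G B0 B : ND w G B0 -> ND u ((B0, w) :: G) B -> ND u G B.
Proof.
  intro D0; apply ND_transport with ctx_derives.
  - intros v G1 G2 A S I; apply (proj1 S), I; apply rt_refl.
  - intros; apply ctx_derives_cons; assumption.
  - intros v x G1 G2 S L; exact (ctx_derives_later _ _ _ _ S L).
  - split; intros X x _ I.
    + destruct I as [E | I]; [injection E as <- <-; exact D0 | now apply ND_hyp].
    + apply ND_hyp; now right.
Qed.

Definition up_bot_replaceable (v : W) (C : neg) (j : fjudg W) : Prop :=
  match j with
  | Defs.JInv _ G Om C0 => C0 = Up PBot -> Foc v (JInv G Om C)
  | Defs.JLF _ G N w C0 => C0 = Up PBot -> Foc v (JLF G N w C)
  | Defs.JRF _ _ _ => True
  end.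

(* A derivation with succedent [↑⊥] never uses its succedent, so each of its
   inferences can be replayed with any stable succedent at any earlier world. *)
Lemma Foc_at_up_bot_replaceable w v C j : reach v w -> stable_neg C ->
  Foc_at W prec (Foc_later w) w j -> up_bot_replaceable v C j.
Proof.
  intros Rvw sC F.
  induction F as [G q Hin | G A F IHF | G A w' p F | G A F | G A B F IHF | G A w' C0 s F IHF
                 | G A w' C0 Hin s R F IHF | G w' C0 | G A w' C0 R K IHK | G A w' C0 R K IHK
                 | G A F IHF | G q | G A w' C0 F IHF | G A B C0 F1 IHF1 F2 IHF2
                 | G A B w' C0 Hw F1 F2 IHF2]; simpl; try exact I; intro E; try discriminate E.
  - apply Foc_L; [exact s | exact (IHF E)].
  - apply Foc_DownL with A w'; [exact Hin | exact sC | eapply rt_trans; eauto | exact (IHF E)].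
  - apply Foc_BotL.
  - apply Foc_DiaL; [eapply rt_trans; eauto |]; intros x p Fx.
    apply (IHK x p); [| exact E].
    exists (reach_later_trans _ _ _ R (later_of_prec _ _ p)); exact Fx.
  - apply Foc_BoxL; [eapply rt_trans; eauto |]; intro Hall.
    apply IHK; [intros x p | exact E].
    exists (reach_later_trans _ _ _ R (later_of_prec _ _ p)); exact (Hall x p).
  - injection E as ->; inversion F.
  - apply Foc_UpL, IHF, E.
  - apply Foc_ImpL; [exact Rvw | apply Foc_unfold, F1 | exact (IHF2 E)].
  - destruct F1 as [_ F1].
    apply Foc_ImpL; [| exact F1 | exact (IHF2 E)].
    eapply rt_trans; [exact Rvw | apply clos_t_clos_rt, Hw].
Qed.

Lemma Foc_up_bot w v G C : reach v w -> stable_neg C ->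
  Foc w (JInv G None (Up PBot)) -> Foc v (JInv G None C).
Proof.
  intros R sC F; apply Foc_unfold in F.
  exact (Foc_at_up_bot_replaceable w v C _ R sC F eq_refl).
Qed.

(** * Soundness of the focused calculus *)

Lemma oplus_PAtom B q : oplus B = PAtom q -> B = UPosAt q.
Proof. destruct B; simpl; intro E; inversion E; auto. Qed.
Lemma oplus_Down B N : oplus B = Down N -> N = ominus B.
Proof. destruct B; simpl; intro E; inversion E; auto. Qed.
Lemma oplus_PBot B : oplus B = PBot -> B = UBot.
Proof. destruct B; simpl; intro E; inversion E; auto. Qed.
Lemma oplus_PDia B A : oplus B = PDia A -> exists B1, B = UDia B1 /\ A = oplus B1.
Proof. destruct B; simpl; intro E; inversion E; eauto. Qed.
Lemma oplus_PBox B A : oplus B = PBox A -> exists B1, B = UBox B1 /\ A = oplus B1.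
Proof. destruct B; simpl; intro E; inversion E; eauto. Qed.
Lemma ominus_Up B A : ominus B = Up A -> A = oplus B.
Proof. destruct B; simpl; intro E; inversion E; auto. Qed.
Lemma ominus_NAtom B q : ominus B = NAtom q -> B = UNegAt q.
Proof. destruct B; simpl; intro E; inversion E; auto. Qed.
Lemma ominus_Imp B A N : ominus B = Imp A N ->
  exists B1 B2, B = UImp B1 B2 /\ A = oplus B1 /\ N = ominus B2.
Proof. destruct B; simpl; intro E; inversion E; eauto. Qed.
Lemma ctx_hyp_PAtom B q : ctx_hyp B = PAtom q -> B = UPosAt q.
Proof. destruct B; simpl; intro E; inversion E; auto. Qed.
Lemma ctx_hyp_Down B N : ctx_hyp B = Down N -> N = ominus B.
Proof. destruct B; simpl; intro E; inversion E; auto. Qed.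
Lemma ctx_hyp_stable B : stable_pos (oplus B) -> ctx_hyp B = oplus B.
Proof. destruct B; simpl; intro E; easy. Qed.

Lemma In_ctx_pol (G : uctx W) X x :
  In (X, x) (ctx_pol G) <-> exists B, ctx_hyp B = X /\ In (B, x) G.
Proof.
  unfold ctx_pol; rewrite in_map_iff; split.
  - intros [[B y] [E I]]; injection E as <- <-; eauto.
  - intros [B [<- I]]; now exists (B, x).
Qed.

Lemma Foc_up_oplus u G B :
  Foc u (JInv G None (ominus B)) -> Foc u (JInv G None (Up (oplus B))).
Proof. destruct B; simpl; auto; intro F; apply Foc_UpR, Foc_DownR, F. Qed.

Definition ctx_ext (v : W) (G1 G2 : uctx W) : Prop :=
  incl G1 G2 /\ (forall A x, In (A, x) G2 -> x <> v -> In (A, x) G1).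

Lemma ctx_ext_refl v G : ctx_ext v G G.
Proof. split; [apply incl_refl | auto]. Qed.

Lemma ctx_ext_trans v G1 G2 G3 : ctx_ext v G1 G2 -> ctx_ext v G2 G3 -> ctx_ext v G1 G3.
Proof. intros [I12 E12] [I23 E23]; split; [eapply incl_tran; eauto | auto]. Qed.

Lemma ctx_ext_cons v G A : ctx_ext v G ((A, v) :: G).
Proof.
  split; [apply incl_tl, incl_refl |].
  intros B x [E | I] N; [injection E as _ <-; contradiction | exact I].
Qed.

Lemma ctx_ext_cons2 v G1 G2 a : ctx_ext v G1 G2 -> ctx_ext v (a :: G1) (a :: G2).
Proof.
  intros [I12 E12]; split; [apply incl_cons; [now left | now apply incl_tl] |].
  intros B x [E | I] N; [now left | right; auto].
Qed.

Lemma ctx_ext_le v G1 G2 : ctx_ext v G1 G2 -> ctx_le v G1 G2.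
Proof.
  intros [I12 E12]; split; [auto |].
  intros X x L I; apply E12; [exact I |]; intros ->; exact (later_irrefl _ L).
Qed.

Lemma ctx_ext_later v w G1 G2 : ctx_ext v G1 G2 -> later w v -> ctx_le w G2 G1 /\ ctx_le w G1 G2.
Proof.
  intros [I12 E12] L; split; split; intros X x H I; auto.
  - apply E12; [exact I |]; intros ->; exact (reach_later_absurd _ _ H L).
  - apply E12; [exact I |]; intros ->; exact (later_irrefl _ (later_trans _ _ _ H L)).
Qed.

Definition polarizes (C : neg) (B : uprop) : Prop := C = ominus B \/ C = Up (oplus B).

(* The unpolarized context [Gb] may extend [Ga] at [v] (by hypotheses introduced by
   implication right rules), and the formula [B0] under inversion or focus at [w] is
   accounted for by a natural deduction proof of [B0] at [w]. *)
Definition sound_goal (v : W) (j : fjudg W) : Prop :=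
  match j with
  | Defs.JRF _ G A => forall Ga Gb B,
      G = ctx_pol Ga -> ctx_ext v Ga Gb -> A = oplus B -> ND v Gb B
  | Defs.JInv _ G None C => forall Ga Gb B,
      G = ctx_pol Ga -> ctx_ext v Ga Gb -> polarizes C B -> ND v Gb B
  | Defs.JInv _ G (Some (X, w)) C => forall Ga Gb B0 B,
      G = ctx_pol Ga -> ctx_ext v Ga Gb -> X = oplus B0 -> polarizes C B ->
      reach v w -> ND w Gb B0 -> ND v Gb B
  | Defs.JLF _ G N w C => forall Ga Gb B0 B,
      G = ctx_pol Ga -> ctx_ext v Ga Gb -> N = ominus B0 -> polarizes C B ->
      reach v w -> ND w Gb B0 -> ND v Gb B
  end.

Definition sound_at (u : W) : Prop := forall j, Foc u j -> sound_goal u j.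

Definition complete_at (u : W) : Prop :=
  forall G B, ND u G B -> Foc u (JInv (ctx_pol G) None (ominus B)).

Section Soundness.

Variable v : W.
Hypothesis levels_later : forall u, later u v -> complete_at u /\ sound_at u.

Lemma ND_of_later_inv u Ga Gb B : later u v -> ctx_ext v Ga Gb ->
  Foc u (JInv (ctx_pol Ga) None (Up (oplus B))) -> ND u Gb B.
Proof.
  intros L E F; apply ND_weaken with Ga; [exact (proj2 (ctx_ext_later _ _ _ _ E L)) |].
  exact (proj2 (levels_later u L) _ F Ga Ga B eq_refl (ctx_ext_refl _ _) (or_intror eq_refl)).
Qed.

Lemma ND_of_later_focus u Ga Gb B : later u v -> ctx_ext v Ga Gb ->
  Foc u (JRF (ctx_pol Ga) (oplus B)) -> ND u Gb B.
Proof.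
  intros L E F; apply ND_weaken with Ga; [exact (proj2 (ctx_ext_later _ _ _ _ E L)) |].
  exact (proj2 (levels_later u L) _ F Ga Ga B eq_refl (ctx_ext_refl _ _) eq_refl).
Qed.

Lemma Foc_of_later_ND u Ga Gb B : later u v -> ctx_ext v Ga Gb ->
  ND u Gb B -> Foc u (JInv (ctx_pol Ga) None (Up (oplus B))).
Proof.
  intros L E D; apply Foc_up_oplus, (proj1 (levels_later u L)).
  apply ND_weaken with Gb; [exact (proj1 (ctx_ext_later _ _ _ _ E L)) | exact D].
Qed.

Lemma sound_DiaL G A w C : reach v w ->
  (forall x, prec w x -> Foc_later v x (JInv G None (Up A)) -> sound_goal v (JInv G None C)) ->
  sound_goal v (JInv G (Some (PDia A, w)) C).
Proof.
  intros R K Ga Gb B0 B -> E EA Sh _ D.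
  destruct (oplus_PDia _ _ (eq_sym EA)) as [B1 [-> ->]].
  apply (ND_diaE _ _ _ _ _ R D); intros x p Dx.
  assert (L : later x v) by exact (reach_later_trans _ _ _ R (later_of_prec _ _ p)).
  refine (K x p _ Ga Gb B eq_refl E Sh).
  exists L; exact (Foc_of_later_ND _ _ _ _ L E Dx).
Qed.

Lemma sound_BoxL G A w C : reach v w ->
  ((forall x, prec w x -> Foc_later v x (JInv G None (Up A))) -> sound_goal v (JInv G None C)) ->
  sound_goal v (JInv G (Some (PBox A, w)) C).
Proof.
  intros R K Ga Gb B0 B -> E EA Sh _ D.
  destruct (oplus_PBox _ _ (eq_sym EA)) as [B1 [-> ->]].
  apply (ND_boxE _ _ _ _ _ R D); intro Dall.
  refine (K _ Ga Gb B eq_refl E Sh); intros x p.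
  assert (L : later x v) by exact (reach_later_trans _ _ _ R (later_of_prec _ _ p)).
  exists L; exact (Foc_of_later_ND _ _ _ _ L E (Dall x p)).
Qed.

Lemma sound_level j : Foc_at W prec (Foc_later v) v j -> sound_goal v j.
Proof.
  intro F.
  induction F as [G q Hin | G A F IHF | G A w' p F | G A F | G A B F IHF | G A w' C s F IHF
                 | G A w' C Hin s R F IHF | G w' C | G A w' C R K IHK | G A w' C R K IHK
                 | G A F IHF | G q | G A w' C F IHF | G A B C F1 IHF1 F2 IHF2
                 | G A B w' C Hw F1 F2 IHF2]; simpl.
  - intros Ga Gb B -> E EA; rewrite (oplus_PAtom _ _ (eq_sym EA)).
    apply In_ctx_pol in Hin as [B1 [E1 I]]; rewrite (ctx_hyp_PAtom _ _ E1) in I.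
    apply ND_hyp, (proj1 E), I.
  - intros Ga Gb B -> E EA; apply (IHF Ga Gb B eq_refl E), or_introl, oplus_Down, eq_sym, EA.
  - intros Ga Gb B -> E EA; destruct (oplus_PDia _ _ (eq_sym EA)) as [B1 [-> ->]].
    destruct F as [L F]; apply ND_diaI with w'; [exact p | exact (ND_of_later_inv _ _ _ _ L E F)].
  - intros Ga Gb B -> E EA; destruct (oplus_PBox _ _ (eq_sym EA)) as [B1 [-> ->]].
    apply ND_boxI; intros x p; destruct (F x p) as [L Fx]; exact (ND_of_later_inv _ _ _ _ L E Fx).
  - intros Ga Gb Bg -> E [EC | EC]; [| discriminate EC].
    destruct (ominus_Imp _ _ _ (eq_sym EC)) as [B1 [B2 [-> [-> ->]]]].
    apply ND_impI, (IHF Ga _ B1 B2 eq_refl); [| reflexivity | now left | apply rt_refl |].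
    + eapply ctx_ext_trans; [exact E | apply ctx_ext_cons].
    + apply ND_hyp; now left.
  - intros Ga Gb B0 B -> E -> Sh _ D; apply (ND_cut _ _ _ _ _ D).
    apply (IHF ((B0, w') :: Ga)); [| now apply ctx_ext_cons2 | exact Sh].
    simpl; now rewrite ctx_hyp_stable.
  - intros Ga Gb B -> E Sh.
    apply In_ctx_pol in Hin as [B1 [E1 I]]; apply ctx_hyp_Down in E1 as ->.
    apply (IHF Ga Gb B1 B eq_refl E eq_refl Sh R), ND_hyp, (proj1 E), I.
  - intros Ga Gb B0 B _ _ EA _ R D; rewrite (oplus_PBot _ (eq_sym EA)) in D.
    exact (ND_botE _ _ _ _ R D).
  - exact (sound_DiaL _ _ _ _ R IHK).
  - exact (sound_BoxL _ _ _ _ R IHK).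
  - intros Ga Gb B -> E [EC | EC]; apply (IHF Ga Gb B eq_refl E).
    + apply ominus_Up, eq_sym, EC.
    + now injection EC.
  - intros Ga Gb B0 B _ _ EN [EC | EC] _ D; [| discriminate EC].
    rewrite (ominus_NAtom _ _ (eq_sym EN)) in D; now rewrite (ominus_NAtom _ _ (eq_sym EC)).
  - intros Ga Gb B0 B -> E EN; apply (IHF Ga Gb B0 B eq_refl E), ominus_Up, eq_sym, EN.
  - intros Ga Gb B0 Bg -> E EN Sh R D.
    destruct (ominus_Imp _ _ _ (eq_sym EN)) as [B1 [B2 [-> [-> ->]]]].
    apply (IHF2 Ga Gb B2 Bg eq_refl E eq_refl Sh R).
    apply ND_impE with B1; [exact D | exact (IHF1 Ga Gb B1 eq_refl E eq_refl)].
  - intros Ga Gb B0 Bg -> E EN Sh R D.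
    destruct (ominus_Imp _ _ _ (eq_sym EN)) as [B1 [B2 [-> [-> ->]]]].
    apply (IHF2 Ga Gb B2 Bg eq_refl E eq_refl Sh R).
    destruct F1 as [L F1].
    apply ND_impE with B1; [exact D | exact (ND_of_later_focus _ _ _ _ L E F1)].
Qed.

End Soundness.

(** * Completeness of the focused calculus *)

Lemma ctx_le_ctx_pol u (G1 G2 : uctx W) : ctx_le u G1 G2 -> ctx_le u (ctx_pol G1) (ctx_pol G2).
Proof.
  intros [S12 S21]; split; intros X x H I; apply In_ctx_pol in I as [B [E I]];
    apply In_ctx_pol; exists B; split; auto.
Qed.

Section Completeness.

Variable v : W.
Hypothesis levels_later : forall u, later u v -> complete_at u /\ sound_at u.

Definition Inv (G : uctx W) (C : neg) : Prop := Foc v (JInv (ctx_pol G) None C).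

(* [P] holds in [G] up to a continuation: a stable inversion sequent at [v] that follows from
   [P] in all further extensions already holds. *)
Definition Cov (G : uctx W) (P : uctx W -> Prop) : Prop :=
  forall G1, ctx_ext v G G1 -> forall C, stable_neg C ->
    (forall G2, ctx_ext v G1 G2 -> P G2 -> Inv G2 C) -> Inv G1 C.

Definition pval (G : uctx W) (B : uprop) : Prop :=
  match B with
  | UPosAt q => In (UPosAt q, v) G
  | UDia A => exists w, prec v w /\ ND w G A
  | UBox A => forall w, prec v w -> ND w G A
  | _ => False
  end.

Fixpoint sem (G : uctx W) (B : uprop) : Prop :=
  match B with
  | UNegAt q => Inv G (NAtom q)
  | UImp A B' => forall G', ctx_ext v G G' -> sem G' A -> sem G' B'
  | _ => Cov G (fun G' => pval G' B)
  end.

Definition neutral (G : uctx W) (B : uprop) : Prop :=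
  forall G1, ctx_ext v G G1 -> forall C, stable_neg C ->
    Foc v (JLF (ctx_pol G1) (ominus B) v C) -> Inv G1 C.

Lemma pval_mono G1 G2 B : ctx_ext v G1 G2 -> pval G1 B -> pval G2 B.
Proof.
  intros E; destruct B; simpl; auto.
  - apply (proj1 E).
  - intros [w [p D]]; exists w; split; [exact p |].
    exact (ND_weaken _ _ _ _ (proj2 (ctx_ext_later _ _ _ _ E (later_of_prec _ _ p))) D).
  - intros D w p.
    exact (ND_weaken _ _ _ _ (proj2 (ctx_ext_later _ _ _ _ E (later_of_prec _ _ p))) (D w p)).
Qed.

Lemma Foc_ext G1 G2 j : ctx_ext v G1 G2 -> judg_ctx j = ctx_pol G1 -> Foc v j ->
  Foc v (judg_with_ctx j (ctx_pol G2)).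
Proof.
  intros E Ej; apply Foc_weaken; rewrite Ej.
  apply ctx_le_ctx_pol, ctx_ext_le, E.
Qed.

Lemma Inv_mono G1 G2 C : ctx_ext v G1 G2 -> Inv G1 C -> Inv G2 C.
Proof. intros E F; exact (Foc_ext G1 G2 (JInv _ None C) E eq_refl F). Qed.

Lemma Cov_unit G B : pval G B -> Cov G (fun G' => pval G' B).
Proof. intros V G1 E1 C _ K; apply K; [apply ctx_ext_refl | exact (pval_mono _ _ _ E1 V)]. Qed.

Lemma sem_mono B : forall G1 G2, ctx_ext v G1 G2 -> sem G1 B -> sem G2 B.
Proof.
  induction B; intros G1 G2 E H; simpl in *;
    try (intros G3 E3; apply H; eapply ctx_ext_trans; eauto; fail).
  exact (Inv_mono _ _ _ E H).
Qed.

Lemma sem_of_pval G B : pval G B -> sem G B.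
Proof. destruct B; intro V; try contradiction V; exact (Cov_unit _ _ V). Qed.

Lemma sem_Cov B : forall G, Cov G (fun G' => sem G' B) -> sem G B.
Proof.
  induction B; intros G H; simpl in *.
  2: exact (H G (ctx_ext_refl _ _) (NAtom n) I (fun _ _ S => S)).
  3: { intros G' E' SA; apply IHB2; intros G1 E1 C sC K.
       apply (H G1 (ctx_ext_trans _ _ _ _ E' E1) C sC); intros G2 E2 SI.
       apply K, SI; [exact E2 | apply ctx_ext_refl | eapply sem_mono; [| exact SA]].
       eapply ctx_ext_trans; eauto. }
  all: intros G1 E1 C sC K; apply (H G1 E1 C sC); intros G2 E2 S2.
  all: apply (S2 G2 (ctx_ext_refl _ _) C sC); intros G3 E3 V.
  all: apply K; [eapply ctx_ext_trans; eauto | exact V].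
Qed.

Lemma sem_bind G B P : Cov G P -> (forall G', ctx_ext v G G' -> P G' -> sem G' B) -> sem G B.
Proof.
  intros H K; apply sem_Cov; intros G1 E1 C sC K'.
  apply (H G1 E1 C sC); intros G2 E2 PG2.
  apply K'; [exact E2 | apply K; [eapply ctx_ext_trans; eauto | exact PG2]].
Qed.

Lemma sem_of_absurd G B : (forall G1 C, ctx_ext v G G1 -> stable_neg C -> Inv G1 C) -> sem G B.
Proof. intro H; apply sem_Cov; intros G1 E1 C sC _; exact (H G1 C E1 sC). Qed.

Lemma pval_focus G B : pval G B -> Foc v (JRF (ctx_pol G) (oplus B)).
Proof.
  destruct B; simpl; try contradiction.
  - intro I; apply Foc_QR, In_ctx_pol; now exists (UPosAt n).
  - intros [w [p D]]; apply Foc_DiaR with w; [exact p |].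
    exact (Foc_of_later_ND v levels_later _ _ _ _ (later_of_prec _ _ p) (ctx_ext_refl _ _) D).
  - intro D; apply Foc_BoxR; intros w p.
    exact (Foc_of_later_ND v levels_later _ _ _ _ (later_of_prec _ _ p) (ctx_ext_refl _ _) (D w p)).
Qed.

Definition reflects (B : uprop) : Prop := forall G, neutral G B -> sem G B.
Definition reifies (B : uprop) : Prop := forall G, sem G B -> Inv G (ominus B).

Lemma sem_focus G A C : reifies A -> sem G A -> stable_neg C ->
  (forall G', ctx_ext v G G' -> Foc v (JRF (ctx_pol G') (oplus A)) -> Inv G' C) -> Inv G C.
Proof.
  intros Rei S sC K; destruct A;
    try (apply (S G (ctx_ext_refl _ _) C sC); intros G' E' V; exact (K G' E' (pval_focus _ _ V))).
  all: apply K; [apply ctx_ext_refl | apply Foc_DownR, Rei, S].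
Qed.

(* [P] is instantiated by [pval] for reflection and by [sem] for reifying implications. *)
Lemma Inv_left B C G (P : uctx W -> Prop) :
  (stable_pos (oplus B) -> P ((B, v) :: G)) ->
  (forall G', pval G' B -> P G') ->
  (forall G', ctx_ext v G G' -> P G' -> Inv G' C) ->
  Foc v (JInv (ctx_pol G) (Some (oplus B, v)) C).
Proof.
  intros Hst Hval K.
  assert (Hlater : forall x A, prec v x ->
                    Foc x (JInv (ctx_pol G) None (Up (oplus A))) -> ND x G A).
  { intros x A p; apply (ND_of_later_inv v levels_later);
      [apply later_of_prec, p | apply ctx_ext_refl]. }
  destruct B; simpl in Hst, Hval |- *.
  1, 2, 4: apply Foc_L; [exact I | exact (K _ (ctx_ext_cons _ _ _) (Hst I))].
  - apply Foc_BotL.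
  - apply Foc_DiaL; [apply rt_refl |]; intros x p F.
    apply K; [apply ctx_ext_refl | apply Hval; exists x; split; [exact p | exact (Hlater _ _ p F)]].
  - apply Foc_BoxL; [apply rt_refl |]; intro F.
    apply K; [apply ctx_ext_refl | apply Hval; intros x p; exact (Hlater _ _ p (F x p))].
Qed.

Lemma reflect_Cov G B : ominus B = Up (oplus B) -> neutral G B -> Cov G (fun G' => pval G' B).
Proof.
  intros EB N G1 E1 C sC K.
  apply (N G1 E1 C sC); rewrite EB; apply Foc_UpL, (Inv_left B C G1 (fun G' => pval G' B)); auto.
  intro s; destruct B; simpl in EB, s |- *; try discriminate EB; try contradiction s; now left.
Qed.

Lemma reify_Cov G B : Cov G (fun G' => pval G' B) -> Inv G (Up (oplus B)).
Proof.
  intro H; apply (H G (ctx_ext_refl _ _) (Up (oplus B)) I).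
  intros G' _ V; apply Foc_UpR, pval_focus, V.
Qed.

Lemma neutral_hyp G B : (forall q, B <> UPosAt q) -> In (B, v) G -> neutral G B.
Proof.
  intros NP I G1 E1 C sC F.
  apply Foc_DownL with (ominus B) v; [| exact sC | apply rt_refl | exact F].
  apply In_ctx_pol; exists B; split; [| apply (proj1 E1), I].
  destruct B; try reflexivity; now destruct (NP n).
Qed.

Lemma sem_hyp G B : reflects B -> In (B, v) G -> sem G B.
Proof.
  intros Ref I; destruct B; [exact (Cov_unit _ (UPosAt _) I) | ..].
  all: apply Ref, neutral_hyp; [discriminate | exact I].
Qed.

Lemma reflect_reify_imp B1 B2 : reflects B1 -> reifies B1 -> reflects B2 -> reifies B2 ->
  reflects (UImp B1 B2) /\ reifies (UImp B1 B2).
Proof.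
  intros Ref1 Rei1 Ref2 Rei2; split.
  - intros G N G' E' S1; apply Ref2; intros G1 E1 C sC F.
    apply (sem_focus G1 B1 C Rei1 (sem_mono _ _ _ E1 S1) sC); intros G2 E2 FR.
    apply (N G2); [do 2 (eapply ctx_ext_trans; eauto) | exact sC |].
    apply Foc_ImpL; [apply rt_refl | exact FR | exact (Foc_ext G1 G2 (JLF _ _ v C) E2 eq_refl F)].
  - intros G S; unfold Inv; simpl; apply Foc_ImpR, (Inv_left B1 _ G (fun G' => sem G' B1)).
    + intros _; apply sem_hyp; [exact Ref1 | now left].
    + intros G' V; exact (sem_of_pval _ _ V).
    + intros G' E' S1; exact (Rei2 G' (S G' E' S1)).
Qed.

Lemma reflect_reify B : reflects B /\ reifies B.
Proof.
  induction B as [q | q | | B1 [Ref1 Rei1] B2 [Ref2 Rei2] | B _ | B _].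
  4: exact (reflect_reify_imp _ _ Ref1 Rei1 Ref2 Rei2).
  2: split; [intros G N | intros G S; exact S].
  2: exact (N G (ctx_ext_refl _ _) (NAtom q) I (Foc_QL _ _ _)).
  all: split; [intros G N | intros G S; exact (reify_Cov G _ S)].
  all: refine (reflect_Cov G _ _ N); reflexivity.
Qed.

Definition agree_later (G1 G2 : uctx W) : Prop :=
  forall A x, later x v -> (In (A, x) G1 <-> In (A, x) G2).

Lemma agree_later_sym G1 G2 : agree_later G1 G2 -> agree_later G2 G1.
Proof. intros H A x L; symmetry; exact (H A x L). Qed.

Lemma agree_later_ext G G1 G2 : agree_later G G1 -> ctx_ext v G1 G2 -> agree_later G G2.
Proof.
  intros H [I12 E12] A x L; rewrite (H A x L); split; [apply I12 |].
  intro I; apply E12; [exact I |]; intros ->; exact (later_irrefl _ L).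
Qed.

Lemma ND_agree_later x G1 G2 A : agree_later G1 G2 -> later x v -> ND x G1 A -> ND x G2 A.
Proof.
  intros H L; apply ND_weaken; split; intros X y Hy I; apply (H X y), I.
  - exact (later_reach_trans _ _ _ L Hy).
  - exact (later_trans _ _ _ Hy L).
Qed.

Lemma sem_of_later_bot w G B : later w v -> ND w G UBot -> sem G B.
Proof.
  intros L D; apply sem_of_absurd; intros G1 C E1 sC.
  apply (Foc_up_bot w v _ C (reach_of_later _ _ L) sC).
  apply (proj1 (levels_later w L) G1 UBot).
  exact (ND_weaken _ _ _ _ (proj2 (ctx_ext_later _ _ _ _ E1 L)) D).
Qed.

Lemma ND_at_sem Ga B : ND_at W prec (ND_later v) v Ga B ->
  forall Gd, agree_later Ga Gd -> (forall A, In (A, v) Ga -> sem Gd A) -> sem Gd B.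
Proof.
  intro D.
  induction D as [G B I | G C D IHD | G C w Hw Dw | G B C D IHD | G B C D1 IHD1 D2 IHD2
                 | G B w p Dw | G B Dw | G B C D IHD K IHK | G B C w Hw Dw K IHK
                 | G B C D IHD K IHK | G B C w Hw Dw K IHK]; intros Gd Ag Env.
  - exact (Env B I).
  - apply sem_of_absurd; intros G1 C' E1 sC.
    exact (IHD Gd Ag Env G1 E1 C' sC (fun _ _ V => False_ind _ V)).
  - destruct Dw as [L Dw]; exact (sem_of_later_bot _ _ _ L (ND_agree_later _ _ _ _ Ag L Dw)).
  - intros G' E' SA; apply IHD; [| intros A [E | I]].
    + intros A x L; simpl; rewrite (agree_later_ext _ _ _ Ag E' A x L).
      split; [intros [E | I] | now right].
      * injection E as _ ->; exact (False_ind _ (later_irrefl _ L)).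
      * exact I.
    + injection E as ->; exact SA.
    + exact (sem_mono _ _ _ E' (Env A I)).
  - exact (IHD1 Gd Ag Env Gd (ctx_ext_refl _ _) (IHD2 Gd Ag Env)).
  - destruct Dw as [L Dw]; apply sem_of_pval; exists w; split; [exact p |].
    exact (ND_agree_later _ _ _ _ Ag L Dw).
  - apply sem_of_pval; intros w p; destruct (Dw w p) as [L Dw'].
    exact (ND_agree_later _ _ _ _ Ag L Dw').
  - apply (sem_bind _ _ _ (IHD Gd Ag Env)); intros G2 E2 [w [p Dw]].
    assert (Ag2 : agree_later G G2) by exact (agree_later_ext _ _ _ Ag E2).
    assert (L : later w v) by exact (later_of_prec _ _ p).
    apply (IHK w p); [| exact Ag2 |].
    + exists L; exact (ND_agree_later _ _ _ _ (agree_later_sym _ _ Ag2) L Dw).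
    + intros A I; exact (sem_mono _ _ _ E2 (Env A I)).
  - destruct Dw as [L Dw]; destruct (ND_dia_inv _ _ _ Dw) as [[w' [p Dw']] | Dbot].
    + apply (IHK w' p); [| exact Ag | exact Env].
      exists (later_trans _ _ _ (later_of_prec _ _ p) L); exact Dw'.
    + exact (sem_of_later_bot _ _ _ L (ND_agree_later _ _ _ _ Ag L Dbot)).
  - apply (sem_bind _ _ _ (IHD Gd Ag Env)); intros G2 E2 Dall.
    assert (Ag2 : agree_later G G2) by exact (agree_later_ext _ _ _ Ag E2).
    apply IHK; [intros w p | exact Ag2 |].
    + assert (L : later w v) by exact (later_of_prec _ _ p).
      exists L; exact (ND_agree_later _ _ _ _ (agree_later_sym _ _ Ag2) L (Dall w p)).
    + intros A I; exact (sem_mono _ _ _ E2 (Env A I)).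
  - destruct Dw as [L Dw]; destruct (ND_box_inv _ _ _ Dw) as [Dall | Dbot].
    + apply IHK; [intros w' p | exact Ag | exact Env].
      exists (later_trans _ _ _ (later_of_prec _ _ p) L); exact (Dall w' p).
    + exact (sem_of_later_bot _ _ _ L (ND_agree_later _ _ _ _ Ag L Dbot)).
Qed.

Lemma complete_level : complete_at v.
Proof.
  intros G B D; apply (proj2 (reflect_reify B)).
  apply (ND_at_sem G B (proj1 (ND_unfold _ _ _) D) G); [intros A x _; reflexivity |].
  intros A I; exact (sem_hyp G A (proj1 (reflect_reify A)) I).
Qed.

End Completeness.

Lemma complete_sound_at u : complete_at u /\ sound_at u.
Proof.
  induction u as [v IHv] using (well_founded_induction (later_wf W prec wf)).
  split; [exact (complete_level v IHv) |].
  intros j F; exact (sound_level v IHv j (proj1 (Foc_unfold _ _) F)).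
Qed.

End CPL.

Theorem theorem5 (W : Type) (prec : W -> W -> Prop)
  (wf : well_founded (fun x y => prec y x))
  (G : list (uprop * W)) (A : uprop) (w : W) :
  nd_derivable W prec wf G A w <->
  inv_derivable W prec wf (ctx_pol G) None (ominus A) w.
Proof.
  destruct (complete_sound_at W prec wf w) as [complete sound]; split.
  - apply complete.
  - intro F; exact (sound _ F G G A eq_refl (ctx_ext_refl _ _ _) (or_introl eq_refl)).
Qed.
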